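(* Let $G$ be a bus graph containing an $(A,k,B,l)$-variable-box (as defined below), together with $\mathcal{B}$-vertices $O^i_A$ ($i=1,\dots,k$) and $O^j_B$ ($j=1,\dots,l$) and edges $(O^i_A,o^i_A)$ and $(O^j_B,o^j_B)$ joined to the box. Then in any realization $\Gamma$ of $G$: (1) $\Gamma((O^i_A,o^i_A))$ is perpendicular to $\Gamma(A)$ for every $i=1,\dots,k$; (2) $\Gamma((O^j_B,o^j_B))$ is perpendicular to $\Gamma(B)$ for every $j=1,\dots,l$.
   Context: A bus graph is a finite bipartite graph $G=(\mathcal{B},\mathcal{C};\mathcal{E})$ with $\deg(c)\le 4$ for all $c\in\mathcal{C}$. A realization $\Gamma$ of $G$ in the integer grid is a drawing such that: (1) each $B\in\mathcal{B}$ is drawn as a closed line segment $\Gamma(B)$ along a grid line (a ''bus''); (2) each $c\in\mathcal{C}$ is drawn as a grid point $\Gamma(c)$; (3) each edge $(B,c)\in\mathcal{E}$ is drawn as a closed line segment along a grid line between a point of $\Gamma(B)$ and $\Gamma(c)$, perpendicular to $\Gamma(B)$, containing no connectors or buses other than $\Gamma(B)$ and $\Gamma(c)$ (edges may cross other edges); (4) no two buses or connectors intersect. An $(A,B)$-perp consists of three distinct $\mathcal{C}$-vertices $x,y,z$, five distinct $\mathcal{B}$-vertices $A,A',B,B',C$, and the twelve edges $(A,x),(A',x),(B,x),(B',x)$, $(A,y),(A',y),(B,y),(C,y)$, $(A,z),(A',z),(B',z),(C,z)$. An $(A,k,B,l)$-variable-box consists of an $(A,B)$-perp together with additional distinct $\mathcal{C}$-vertices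 $x_A,y_A,z_A,o^1_A,\dots,o^k_A,x_B,y_B,z_B,o^1_B,\dots,o^l_B$, additional distinct $\mathcal{B}$-vertices $R_A,S_A,T_A,U_A,R_B,S_B,T_B,U_B$, and the additional edges: $(A,x_A),(R_A,x_A),(S_A,x_A),(U_A,x_A)$; $(A,y_A),(R_A,y_A),(T_A,y_A),(U_A,y_A)$; $(A,z_A),(S_A,z_A),(T_A,z_A),(U_A,z_A)$; $(R_A,o^i_A),(S_A,o^i_A)$ for $i=1,\dots,k$; $(B,x_B),(R_B,x_B),(S_B,x_B),(U_B,x_B)$; $(B,y_B),(R_B,y_B),(T_B,y_B),(U_B,y_B)$; $(B,z_B),(S_B,z_B),(T_B,z_B),(U_B,z_B)$; $(R_B,o^j_B),(S_B,o^j_B)$ for $j=1,\dots,l$. *)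

From Stdlib Require Import ZArith.
From mathcomp Require Import all_boot.

Set Implicit Arguments.
Unset Strict Implicit.
Unset Printing Implicit Defensive.

(* A bus graph: finite bipartite graph (TB = B-vertices, TC = C-vertices),
   edge relation E, with deg(c) <= 4 for every C-vertex c. *)
Definition bus_graph (TB TC : finType) (E : TB -> TC -> bool) : Prop :=
  forall c : TC, #|[pred b : TB | E b c]| <= 4.

Definition point := (Z * Z)%type.

(* A grid-aligned closed segment: lies on the horizontal grid line y = line
   (if horiz) or on the vertical grid line x = line, covering coordinates
   lo..hi along that line. *)
Record gseg := GSeg { g_horiz : bool; g_line : Z; g_lo : Z; g_hi : Z }.

Definition on_gseg (s : gseg) (p : point) : Prop :=
  if g_horiz s then p.2 = g_line s /\ (g_lo s <= p.1 <= g_hi s)%Z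
  else p.1 = g_line s /\ (g_lo s <= p.2 <= g_hi s)%Z.

Definition on_seg (p q x : point) : Prop :=
  (Z.min p.1 q.1 <= x.1 <= Z.max p.1 q.1)%Z /\
  (Z.min p.2 q.2 <= x.2 <= Z.max p.2 q.2)%Z.

Definition vertical_seg (p q : point) : Prop := p.1 = q.1 /\ p.2 <> q.2.
Definition horizontal_seg (p q : point) : Prop := p.2 = q.2 /\ p.1 <> q.1.

Definition perp_to (p q : point) (s : gseg) : Prop :=
  if g_horiz s then vertical_seg p q else horizontal_seg p q.

(* Drawing data: a grid segment for each bus, a grid point for each
   connector, and for each pair (b,c) the endpoint on the bus of the edge
   drawing (only meaningful when E b c); the edge (b,c) is drawn as the
   segment from att b c to con c. *)
Record drawing (TB TC : finType) := Drawing {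
  bus_of : TB -> gseg;
  con_of : TC -> point;
  att_of : TB -> TC -> point }.

Definition edge_seg (TB TC : finType) (G : drawing TB TC) (b : TB) (c : TC)
  (x : point) : Prop := on_seg (att_of G b c) (con_of G c) x.

Definition realization (TB TC : finType) (E : TB -> TC -> bool)
  (G : drawing TB TC) : Prop :=
  (forall b, (g_lo (bus_of G b) <= g_hi (bus_of G b))%Z) /\
  (forall b c, E b c ->
     [/\ on_gseg (bus_of G b) (att_of G b c),
         perp_to (att_of G b c) (con_of G c) (bus_of G b),
         (forall c' x, c' != c -> edge_seg G b c x -> x <> con_of G c') &
         (forall b' x, b' != b -> edge_seg G b c x -> ~ on_gseg (bus_of G b') x)]) /\
  (forall b b' x, b != b' -> on_gseg (bus_of G b) x -> ~ on_gseg (bus_of G b') x) /\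
  (forall c c', c != c' -> con_of G c <> con_of G c') /\
  (forall b c, ~ on_gseg (bus_of G b) (con_of G c)).

Record varbox (TB TC : finType) (k l : nat) := VarBox {
  vx : TC; vy : TC; vz : TC;
  vA : TB; vA' : TB; vB : TB; vB' : TB; vC : TB;
  xA : TC; yA : TC; zA : TC; oA : 'I_k -> TC;
  RA : TB; SA : TB; TA : TB; UA : TB;
  xB : TC; yB : TC; zB : TC; oB : 'I_l -> TC;
  RB : TB; SB : TB; TB_ : TB; UB : TB }.

Definition vb_cverts (TB TC : finType) k l (V : varbox TB TC k l) : seq TC :=
  [:: vx V; vy V; vz V; xA V; yA V; zA V; xB V; yB V; zB V]
  ++ [seq oA V i | i : 'I_k] ++ [seq oB V j | j : 'I_l].

Definition vb_bverts (TB TC : finType) k l (V : varbox TB TC k l) : seq TB :=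
  [:: vA V; vA' V; vB V; vB' V; vC V; RA V; SA V; TA V; UA V;
      RB V; SB V; TB_ V; UB V].

Definition is_varbox (TB TC : finType) (E : TB -> TC -> bool) k l
  (V : varbox TB TC k l) : Prop :=
  uniq (vb_cverts V) /\ uniq (vb_bverts V) /\
  [/\ E (vA V) (vx V), E (vA' V) (vx V), E (vB V) (vx V) & E (vB' V) (vx V)] /\
  [/\ E (vA V) (vy V), E (vA' V) (vy V), E (vB V) (vy V) & E (vC V) (vy V)] /\
  [/\ E (vA V) (vz V), E (vA' V) (vz V), E (vB' V) (vz V) & E (vC V) (vz V)] /\
  [/\ E (vA V) (xA V), E (RA V) (xA V), E (SA V) (xA V) & E (UA V) (xA V)] /\
  [/\ E (vA V) (yA V), E (RA V) (yA V), E (TA V) (yA V) & E (UA V) (yA V)] /\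
  [/\ E (vA V) (zA V), E (SA V) (zA V), E (TA V) (zA V) & E (UA V) (zA V)] /\
  (forall i, E (RA V) (oA V i) /\ E (SA V) (oA V i)) /\
  [/\ E (vB V) (xB V), E (RB V) (xB V), E (SB V) (xB V) & E (UB V) (xB V)] /\
  [/\ E (vB V) (yB V), E (RB V) (yB V), E (TB_ V) (yB V) & E (UB V) (yB V)] /\
  [/\ E (vB V) (zB V), E (SB V) (zB V), E (TB_ V) (zB V) & E (UB V) (zB V)] /\
  (forall j, E (RB V) (oB V j) /\ E (SB V) (oB V j)).

From Stdlib Require Import ZArith Lia.
From mathcomp Require Import all_boot.

Set Implicit Arguments.
Unset Strict Implicit.
Unset Printing Implicit Defensive.

(* At a connector, the edges coming from parallel buses all lie on the grid
   line through the connector perpendicular to these buses.  Two of them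
   ending on the same side of the connector would be nested, so that one edge
   passes through the attachment point, hence the bus, of the other.  Hence
   at most two incident buses are parallel, and a connector of degree 4 sees
   exactly two horizontal buses.  Applied to x_A, y_A and z_A this forces
   S_A and T_A to be parallel to each other and perpendicular to A, then R_A
   to be parallel to S_A.  The bus O^i_A, meeting R_A and S_A at o^i_A, must
   therefore be parallel to A, so its edge is perpendicular to A. *)

Definition side_of (h : bool) (p q : point) : bool :=
  if h then (p.2 <? q.2)%Z else (p.1 <? q.1)%Z.

Lemma perp_to_same_side_nested (s : gseg) (p1 p2 q : point) :
  perp_to p1 q s -> perp_to p2 q s ->
  side_of (g_horiz s) p1 q = side_of (g_horiz s) p2 q ->
  on_seg p1 q p2 \/ on_seg p2 q p1.
Proof.
rewrite /perp_to /side_of /on_seg /vertical_seg /horizontal_seg.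
by case: (g_horiz s); lia.
Qed.

Lemma balanced_orientations_force_parallel (a r s t u o : bool) :
  a + r + s + u = 2 -> a + r + t + u = 2 -> a + s + t + u = 2 ->
  (o = r -> r = s -> False) -> o = a.
Proof. by case: a r s t u o => [] [] [] [] [] [] //= _ _ _ []. Qed.

Section Realization.

Variables (TB TC : finType) (E : TB -> TC -> bool) (G : drawing TB TC).
Hypothesis realG : realization E G.

Local Notation horiz b := (g_horiz (bus_of G b)).
Local Notation att := (att_of G).
Local Notation con := (con_of G).

Lemma edge_perp_to_bus b c : E b c -> perp_to (att b c) (con c) (bus_of G b).
Proof. by have [_ [edgeG _]] := realG => /edgeG []. Qed.

Lemma edge_misses_attachment b1 b2 c : E b1 c -> E b2 c -> b1 != b2 ->
  ~ edge_seg G b2 c (att b1 c).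
Proof.
have [_ [edgeG _]] := realG => /edgeG [on_b1 _ _ _] /edgeG [_ _ _ avoid] n12 seg.
exact: avoid b1 _ n12 seg on_b1.
Qed.

Lemma parallel_edges_opposite_sides b1 b2 c :
  E b1 c -> E b2 c -> b1 != b2 -> horiz b1 = horiz b2 ->
  side_of (horiz b1) (att b1 c) (con c) != side_of (horiz b2) (att b2 c) (con c).
Proof.
move=> E1 E2 n12 h12; apply/negP => /eqP same_side.
have P1 := edge_perp_to_bus E1; have P2 := edge_perp_to_bus E2.
rewrite /perp_to h12 in P1.
rewrite h12 in same_side.
have [] := perp_to_same_side_nested P1 P2 same_side.
- by apply: (edge_misses_attachment E2 E1); rewrite eq_sym.
- exact: (edge_misses_attachment E1 E2).
Qed.

Lemma at_most_two_parallel b1 b2 b3 c :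
  E b1 c -> E b2 c -> E b3 c -> b1 != b2 -> b1 != b3 -> b2 != b3 ->
  horiz b1 = horiz b2 -> horiz b2 = horiz b3 -> False.
Proof.
move=> E1 E2 E3 n12 n13 n23 h12 h23.
have := parallel_edges_opposite_sides E1 E2 n12 h12.
have := parallel_edges_opposite_sides E1 E3 n13 (etrans h12 h23).
have := parallel_edges_opposite_sides E2 E3 n23 h23.
rewrite -h23 -h12.
by case: side_of; case: side_of; case: side_of.
Qed.

Lemma degree_four_two_horizontal b1 b2 b3 b4 c :
  E b1 c -> E b2 c -> E b3 c -> E b4 c ->
  b1 != b2 -> b1 != b3 -> b1 != b4 -> b2 != b3 -> b2 != b4 -> b3 != b4 ->
  horiz b1 + horiz b2 + horiz b3 + horiz b4 = 2.
Proof.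
move=> E1 E2 E3 E4 n12 n13 n14 n23 n24 n34.
have := at_most_two_parallel E1 E2 E3 n12 n13 n23.
have := at_most_two_parallel E1 E2 E4 n12 n14 n24.
have := at_most_two_parallel E1 E3 E4 n13 n14 n34.
have := at_most_two_parallel E2 E3 E4 n23 n24 n34.
by case: (horiz b1) (horiz b2) (horiz b3) (horiz b4) => [] [] [] [] //= h1 h2 h3 h4;
  exfalso; first [exact: h1 | exact: h2 | exact: h3 | exact: h4].
Qed.

Lemma variable_side_perp (A R S T U O : TB) (x y z o : TC) :
  [/\ E A x, E R x, E S x & E U x] ->
  [/\ E A y, E R y, E T y & E U y] ->
  [/\ E A z, E S z, E T z & E U z] ->
  [/\ E R o, E S o & E O o] ->
  uniq [:: A; R; S; T; U] -> O \notin [:: R; S] ->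
  perp_to (att O o) (con o) (bus_of G A).
Proof.
move=> [Ax Rx Sx Ux] [Ay Ry Ty Uy] [Az Sz Tz Uz] [Ro So Oo].
rewrite /= !inE !negb_or.
case/and5P => /and4P [nAR nAS nAT nAU] /and3P [nRS nRT nRU] /andP [nST nSU] nTU _.
case/andP => nOR nOS.
have split_x := degree_four_two_horizontal Ax Rx Sx Ux nAR nAS nAU nRS nRU nSU.
have split_y := degree_four_two_horizontal Ay Ry Ty Uy nAR nAT nAU nRT nRU nTU.
have split_z := degree_four_two_horizontal Az Sz Tz Uz nAS nAT nAU nST nSU nTU.
have split_o := at_most_two_parallel Oo Ro So nOR nOS nRS.
rewrite /perp_to -(balanced_orientations_force_parallel split_x split_y split_z split_o).
exact: edge_perp_to_bus.
Qed.

End Realization.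

Theorem lemma5 (TB TC : finType) (E : TB -> TC -> bool) (k l : nat)
  (V : varbox TB TC k l) (OA : 'I_k -> TB) (OB : 'I_l -> TB)
  (G : drawing TB TC) :
  bus_graph E ->
  is_varbox E V ->
  uniq (vb_bverts V ++ [seq OA i | i : 'I_k] ++ [seq OB j | j : 'I_l]) ->
  (forall i, E (OA i) (oA V i)) ->
  (forall j, E (OB j) (oB V j)) ->
  realization E G ->
  (forall i : 'I_k, perp_to (att_of G (OA i) (oA V i)) (con_of G (oA V i)) (bus_of G (vA V))) /\
  (forall j : 'I_l, perp_to (att_of G (OB j) (oB V j)) (con_of G (oB V j)) (bus_of G (vB V))).
Proof.
move=> _ [_ [uniq_box [_ [_ [_ [xA [yA [zA [oA [xB [yB [zB oB]]]]]]]]]]]].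
rewrite cat_uniq => /and3P [_ /hasPn outside_box _] OAo OBo realG.
have notin_RS b R S : b \in [seq OA i | i : 'I_k] ++ [seq OB j | j : 'I_l] ->
    R \in vb_bverts V -> S \in vb_bverts V -> b \notin [:: R; S].
  move=> /outside_box /= b_out R_in S_in; rewrite !inE negb_or.
  by apply/andP; split; apply: contraNneq b_out => ->.
(* the masks select [:: A; R_A; S_A; T_A; U_A] and [:: B; R_B; S_B; T_B; U_B] *)
have uniqA := mask_uniq uniq_box
  [:: true; false; false; false; false; true; true; true; true].
have uniqB := mask_uniq uniq_box
  [:: false; false; true; false; false; false; false; false; false; true; true; true; true].
split=> [i | j].
- have [RAo SAo] := oA i.
  apply: (variable_side_perp realG xA yA zA) => //.
  by apply: notin_RS; rewrite ?mem_cat ?map_f ?mem_enum // /vb_bverts !inE eqxx ?orbT.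
- have [RBo SBo] := oB j.
  apply: (variable_side_perp realG xB yB zB) => //.
  by apply: notin_RS; rewrite ?mem_cat ?map_f ?mem_enum ?orbT // /vb_bverts !inE eqxx ?orbT.
Qed.
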